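(* Let $\eta\in(0,1)$. With probability one, for every $j$ large enough and every $W\in\Sigma_{\lfloor\eta j\rfloor}$, one has $\#\mathcal S_j(\eta,W)\le j$.
   Context: Fix $d\ge1$. $\Sigma_j$ is the set of words of length $j$ over the alphabet $\{0,1\}^d$ and $\Sigma^*=\bigcup_{j\ge1}\Sigma_j$; for $w=w_1\cdots w_j\in\Sigma_j$ with $w_k=(w_k^{(1)},\dots,w_k^{(d)})$, $I_w=\prod_{i=1}^d[x_w^{(i)},x_w^{(i)}+2^{-j}]$ where $x_w^{(i)}=\sum_{k=1}^jw_k^{(i)}2^{-k}$. Let $(p_w)_{w\in\Sigma^*}$ be independent Bernoulli random variables with $\mathbb P(p_w=1)=2^{-d(1-\eta)|w|}$. Set $\mathcal S_j(\eta)=\{w\in\Sigma_j:p_w=1\}$ and, for $W\in\Sigma^*$, $\mathcal S_j(\eta,W)=\{w\in\mathcal S_j(\eta): I_w\subset I_W\}$. *)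

From HB Require Import structures.
From mathcomp Require Import all_boot all_order all_algebra.
From mathcomp Require Import all_classical all_reals all_analysis.
Set Implicit Arguments. Unset Strict Implicit. Unset Printing Implicit Defensive.
Import Order.TTheory GRing.Theory Num.Theory.
Local Open Scope classical_set_scope.
Local Open Scope ring_scope.

(* The alphabet {0,1}^d : a letter is a map 'I_d -> bool,
   letter a has coordinates a i = a^(i+1). *)
Definition letter (d : nat) := {ffun 'I_d -> bool}.

(* Words are finite sequences of letters; Sigma_j = words of size j. *)
Definition word (d : nat) := seq (letter d).

Definition letter0 (d : nat) : letter d := [ffun => false].

(* x_w^(i) = sum_{k=1}^{|w|} w_k^(i) 2^{-k}  (0-indexed: k ranges over 0..|w|-1) *)
Definition xcoord (R : realType) (d : nat) (w : word d) (i : 'I_d) : R :=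
  \sum_(k < size w) ((nth (letter0 d) w k i : nat)%:R / 2 ^+ k.+1).

Definition cube (R : realType) (d : nat) (w : word d) : set ('I_d -> R) :=
  [set x | forall i : 'I_d,
     @xcoord R d w i <= x i <= @xcoord R d w i + (2 : R) ^- size w].

Definition mutually_independent_RV (R : realType) (dT : measure_display)
  (T : measurableType dT) (P : probability T R) (I : eqType) (J : set I)
  (X : I -> {RV P >-> R}) : Prop :=
  forall (s : seq I), uniq s -> {subset s <= J} ->
  forall (B : I -> set R), (forall i, measurable (B i)) ->
  P (\bigcap_(i in [set` s]) (X i @^-1` B i)) =
  (\prod_(i <- s) P (X i @^-1` B i))%E.

Definition Sset (R : realType) (dT : measure_display) (T : measurableType dT)
  (P : probability T R) (d : nat) (p : word d -> {RV P >-> R})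
  (j : nat) (W : word d) (t : T) : {set j.-tuple (letter d)} :=
  [set w : j.-tuple (letter d) |
     (p (tval w) t == 1) && `[< @cube R d (tval w) `<=` @cube R d W >]].

(* If [#S_j(eta, W) > j], then [j + 1] of the words of level [j] below [I_W]
   are all retained. A cube [I_w] of level [j] lies in [I_W] only if [W] is a
   prefix of [w], so there are at most [2 ^ (d (j - m))] candidates, where
   [m = floor (eta j)] is the level of [W]. By independence and a union bound
   over the [2 ^ (d m)] words [W] and the [(j + 1)]-subsets of candidates, the
   probability of this bad event is at most
   [2 ^ (d m) C(2 ^ (d (j - m)), j + 1) 2 ^ (- d (1 - eta) j (j + 1))
    <= 2 ^ (d (2 j + 1)) / (j + 1)!],
   which is summable in [j]; Borel-Cantelli concludes. *)

From HB Require Import structures.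
From mathcomp Require Import all_boot all_order all_algebra.
From mathcomp Require Import all_classical all_reals all_analysis.
From mathcomp Require Import zify ring lra.
Set Implicit Arguments.
Unset Strict Implicit.
Unset Printing Implicit Defensive.

Import Order.TTheory GRing.Theory Num.Theory.
Import numFieldNormedType.Exports.
Local Open Scope classical_set_scope.
Local Open Scope ring_scope.

Section dyadic_cubes.
Variable d : nat.

Definition icoord (i : 'I_d) (w : word d) : nat :=
  foldl (fun n (a : letter d) => (n.*2 + a i)%N) 0%N w.

Lemma icoord_rcons i w a : icoord i (rcons w a) = ((icoord i w).*2 + a i)%N.
Proof. by rewrite /icoord foldl_rcons. Qed.

Lemma icoord_lt i w : (icoord i w < 2 ^ size w)%N.
Proof.
elim/last_ind: w => [|w a IH] //.
by rewrite icoord_rcons size_rcons expnS; case: (a i) => /=; lia.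
Qed.

Lemma icoord_cat i w1 w2 :
  icoord i (w1 ++ w2) = (icoord i w1 * 2 ^ size w2 + icoord i w2)%N.
Proof.
elim/last_ind: w2 => [|w2 a IH]; first by rewrite cats0 muln1 addn0.
by rewrite -rcons_cat !icoord_rcons IH size_rcons expnS; lia.
Qed.

Lemma icoord_inj w1 w2 :
  size w1 = size w2 -> (forall i, icoord i w1 = icoord i w2) -> w1 = w2.
Proof.
elim/last_ind: w1 w2 => [|w1 a IH] w2; first by case: w2.
case/lastP: w2 => [|w2 b]; first by rewrite size_rcons.
rewrite !size_rcons => -[sw] e.
have eab i : a i = b i.
  by have := congr1 odd (e i); rewrite !icoord_rcons !oddD !odd_double; do 2 case: (_ i).
congr rcons; last exact/ffunP.
apply: IH sw _ => i; have := e i; rewrite !icoord_rcons eab => /addIn.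
by move/(congr1 half); rewrite !doubleK.
Qed.

Variable R : realType.

Lemma xcoordE w i : @xcoord R d w i = (icoord i w)%:R / 2 ^+ size w.
Proof.
elim/last_ind: w => [|w a IH]; first by rewrite /xcoord big_ord0 mul0r.
rewrite /xcoord size_rcons big_ord_recr /=.
under eq_bigr => k _ do rewrite nth_rcons ltn_ord.
rewrite -/(xcoord R w i) IH nth_rcons ltnn eqxx icoord_rcons natrD -muln2 natrM.
by rewrite exprS; field; rewrite expf_neq0.
Qed.

Lemma cube_sub_corners i w W : @cube R d w `<=` @cube R d W ->
  @xcoord R d W i <= @xcoord R d w i /\
  @xcoord R d w i + 2 ^- size w <= @xcoord R d W i + 2 ^- size W.
Proof.
move=> sub; have side_ge0 : 0 <= (2 : R) ^- size w by rewrite invr_ge0 exprn_ge0.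
have lower : @cube R d w (@xcoord R d w).
  by move=> k; rewrite lexx lerDl side_ge0.
have upper : @cube R d w (fun k => @xcoord R d w k + 2 ^- size w).
  by move=> k; rewrite lexx andbT lerDl side_ge0.
have /(_ i)/andP[lo _] := sub _ lower.
by have /(_ i)/andP[_ hi] := sub _ upper.
Qed.

Lemma nested_dyadic_eq a b c E : (c < E)%N ->
  (a * E <= b * E + c)%N -> (b * E + c + 1 <= a * E + E)%N -> a = b.
Proof. nia. Qed.

Lemma cube_sub_prefix w W : (size W <= size w)%N ->
  @cube R d w `<=` @cube R d W -> take (size W) w = W.
Proof.
move=> Ww sub; set m := size W; set j := size w.
apply: icoord_inj => [|i]; first by rewrite size_takel.
have [lo hi] := cube_sub_corners i sub.
set a := icoord i W; set b := icoord i (take m w); set c := icoord i (drop m w).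
set E := (2 ^ (j - m))%N; set K : R := 2 ^+ j.
have c_lt : (c < E)%N by rewrite /c /E -size_drop icoord_lt.
have K_gt0 : 0 < K by rewrite exprn_gt0.
have KE : K = 2 ^+ m * E%:R by rewrite /K /E natrX -exprD subnKC.
have m_neq0 : (2 : R) ^+ m != 0 by rewrite expf_neq0.
have xw : @xcoord R d w i * K = (b * E + c)%N%:R.
  by rewrite xcoordE -{1}(cat_take_drop m w) icoord_cat size_drop divfK ?gt_eqF.
have xW : @xcoord R d W i * K = (a * E)%N%:R.
  by rewrite xcoordE KE natrM mulrA divfK.
have side_w : 2 ^- j * K = 1 by rewrite mulVf ?gt_eqF.
have side_W : 2 ^- m * K = E%:R by rewrite KE mulrA mulVf // mul1r.
symmetry; apply: (nested_dyadic_eq c_lt).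
  by move: lo; rewrite -(ler_pM2r K_gt0) xw xW ler_nat.
move: hi; rewrite -(ler_pM2r K_gt0) !mulrDl xw xW side_w side_W.
by rewrite natr1 -natrD ler_nat addn1.
Qed.

Definition subcubes j (W : word d) : {set j.-tuple (letter d)} :=
  [set w : j.-tuple (letter d) | `[< @cube R d w `<=` @cube R d W >]].

Lemma card_subcubes j W : (size W <= j)%N ->
  (#|subcubes j W| <= 2 ^ (d * (j - size W)))%N.
Proof.
move=> Wj.
have inj : {in subcubes j W &, injective (@drop_tuple j (size W) (letter d))}.
  move=> w1 w2; rewrite !inE => s1 s2 /(congr1 val) /= e.
  apply: val_inj; rewrite -[val w1](cat_take_drop (size W)).
  by rewrite -[val w2](cat_take_drop (size W)) e !cube_sub_prefix ?size_tuple.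
rewrite -(card_in_imset inj) /=.
apply: leq_trans (max_card _) _.
by rewrite card_tuple card_ffun card_ord card_bool expnM.
Qed.

End dyadic_cubes.

Lemma ffact_le_expn n k : (n ^_ k <= n ^ k)%N.
Proof. by elim: k => // k IH; rewrite ffactnSr expnSr leq_mul ?leq_subr. Qed.

Definition retention_prob (R : realType) (d : nat) (eta : R) (j : nat) : R :=
  2 `^ (- (d%:R * (1 - eta) * j%:R)).

Lemma truncn_mulr_le (R : realType) (eta : R) j :
  eta <= 1 -> (Num.truncn (eta * j%:R) <= j)%N.
Proof.
move=> eta_le1; rewrite truncn_le_nat -natr1.
suff : eta * j%:R <= j%:R by lra.
by rewrite -[leRHS]mul1r ler_wpM2r.
Qed.

Section counting_bounds.
Variables (R : realType) (d : nat) (eta : R).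
Hypothesis eta_lt1 : eta < 1.

Local Notation prefix_len j := (Num.truncn (eta * j%:R)).
Local Notation x := ((2 ^ d)%:R : R).

(* [m = floor (eta j) > eta j - 1] makes the exponent [d (j - m) - d (1 - eta) j]
   smaller than [d]. *)
Lemma card_subcubes_retention_le j :
  (2 ^ (d * (j - prefix_len j)))%:R * retention_prob d eta j <= x.
Proof.
have m_gt : eta * j%:R < (prefix_len j)%:R + 1.
  by rewrite natr1 truncnS_gt.
rewrite natrX -powR_mulrn // /retention_prob -powRD; last by apply/implyP.
rewrite natrX -powR_mulrn //; apply: ler_powR; first by rewrite ler1n.
rewrite natrM natrB ?(truncn_mulr_le _ (ltW eta_lt1)) //.
have := ler0n R d; nra.
Qed.

Lemma bad_bound_le_exp_coeff n :
  ((2 ^ d) ^ prefix_len n.+1)%:R *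
    ('C(2 ^ (d * (n.+1 - prefix_len n.+1)), n.+2)%:R *
      retention_prob d eta n.+1 ^+ n.+2)
  <= x ^+ 3 * exp_coeff (x ^+ 2) n.
Proof.
set j := n.+1; set m := prefix_len j; set N := (2 ^ (d * (j - m)))%N.
set q := retention_prob d eta j.
have x_ge1 : 1 <= x by rewrite ler1n expn_gt0.
have x_gt0 : 0 < x by rewrite ltr0n expn_gt0.
have q_ge0 : 0 <= q by apply: powR_ge0.
have kfact_gt0 : 0 < (j.+1)`!%:R :> R by rewrite ltr0n fact_gt0.
have binom_le : 'C(N, j.+1)%:R * q ^+ j.+1 <= x ^+ j.+1 / (j.+1)`!%:R.
  rewrite ler_pdivlMr // mulrAC -natrM.
  apply: le_trans (_ : N%:R ^+ j.+1 * q ^+ j.+1 <= _).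
    by rewrite ler_wpM2r ?exprn_ge0 // -natrX ler_nat bin_ffact ffact_le_expn.
  rewrite -exprMn lerXn2r ?nnegrE ?mulr_ge0 //.
  exact: card_subcubes_retention_le.
have level_le : x ^+ m <= x ^+ j := ler_weXn2l x_ge1 (truncn_mulr_le j (ltW eta_lt1)).
rewrite natrX exp_coeffE /=.
apply: le_trans (_ : x ^+ j * (x ^+ j.+1 / (j.+1)`!%:R) <= _).
  by apply: ler_pM => //; rewrite mulr_ge0 ?exprn_ge0.
rewrite mulrA -exprD (_ : (j + j.+1 = 3 + 2 * n)%N); last by rewrite /j; lia.
rewrite exprD exprM -mulrA (ler_pM2l (exprn_gt0 _ x_gt0)) [leRHS]mulrC.
rewrite (ler_pM2l (exprn_gt0 _ (exprn_gt0 _ x_gt0))) lef_pV2 ?posrE ?ltr0n ?fact_gt0 //.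
by rewrite ler_nat leq_fact // /j; lia.
Qed.

End counting_bounds.

Lemma measure_bigsetU_le dT (T : measurableType dT) (R : realType)
    (mu : {measure set T -> \bar R}) (I : Type) (r : seq I) (P : pred I)
    (F : I -> set T) :
  (forall i, P i -> measurable (F i)) ->
  (mu (\big[setU/set0]_(i <- r | P i) F i) <= \sum_(i <- r | P i) mu (F i))%E.
Proof.
move=> mF; elim: r => [|i r IH]; first by rewrite !big_nil measure0.
rewrite !big_cons; case: ifP => // Pi.
apply: le_trans (measureU2 _ _ _) _ => //; first exact: mF.
  exact: bigsetU_measurable.
by rewrite leeD2l.
Qed.
Arguments measure_bigsetU_le {dT T R} mu {I r P F}.

Section bad_events.
Variables (R : realType) (dT : measure_display) (T : measurableType dT).
Variables (P : probability T R) (d : nat) (eta : R) (p : word d -> {RV P >-> R}).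
Hypothesis p1 : forall w : word d, (0 < size w)%N ->
  P (p w @^-1` [set 1]) = (retention_prob d eta (size w))%:E.
Hypothesis p_indep : mutually_independent_RV [set w : word d | (0 < size w)%N] p.
Hypothesis eta_lt1 : eta < 1.

Local Notation prefix_len j := (Num.truncn (eta * j%:R)).

Definition all_ones (s : seq (word d)) : set T :=
  \bigcap_(w in [set` s]) p w @^-1` [set 1].

Lemma measurable_all_ones s : measurable (all_ones s).
Proof.
rewrite /all_ones bigcap_seq; apply: bigsetI_measurable => w _.
exact: measurable_funPTI (measurable_set1 _).
Qed.

Lemma prob_all_ones j (A : {set j.-tuple (letter d)}) : (0 < j)%N ->
  P (all_ones [seq val w | w <- enum A]) = (retention_prob d eta j ^+ #|A|)%:E.
Proof.
move=> j_gt0; rewrite /all_ones (p_indep _ _ (fun=> measurable_set1 1)).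
- rewrite big_map big_enum /=.
  under eq_bigr => w _ do rewrite p1 size_tuple //.
  by rewrite prodEFin prodr_const.
- by rewrite map_inj_uniq ?enum_uniq //; exact: val_inj.
- by move=> _ /mapP[w _ ->]; apply: mem_set; rewrite /= size_tuple.
Qed.

Definition dense_families j (W : word d) : {set {set j.-tuple (letter d)}} :=
  [set A : {set j.-tuple (letter d)} | (A \subset subcubes R j W) & #|A| == j.+1].

Definition bad_event j : set T :=
  \big[setU/set0]_(W : (prefix_len j).-tuple (letter d))
    \big[setU/set0]_(A in dense_families j W) all_ones [seq val w | w <- enum A].

Lemma measurable_bad_event j : measurable (bad_event j).
Proof.
apply: bigsetU_measurable => W _; apply: bigsetU_measurable => A _.
exact: measurable_all_ones.
Qed.

Lemma prob_bad_event_le j : (0 < j)%N ->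
  (P (bad_event j) <= (((2 ^ d) ^ prefix_len j)%:R *
    ('C(2 ^ (d * (j - prefix_len j)), j.+1)%:R *
      retention_prob d eta j ^+ j.+1))%:E)%E.
Proof.
move=> j_gt0; set q := retention_prob d eta j; rewrite /bad_event.
apply: le_trans (measure_bigsetU_le P _) _ => [W _|].
  by apply: bigsetU_measurable => A _; exact: measurable_all_ones.
apply: le_trans (_ : \sum_(W : (prefix_len j).-tuple (letter d))
    ('C(2 ^ (d * (j - prefix_len j)), j.+1)%:R * q ^+ j.+1)%:E <= _)%E.
  apply: lee_sum => W _; apply: le_trans (measure_bigsetU_le P _) _ => [A _|].
    exact: measurable_all_ones.
  apply: le_trans (_ : \sum_(A in dense_families j W) (q ^+ j.+1)%:E <= _)%E.
    apply: lee_sum => A /setIdP[_ /eqP cardA].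
    by have := prob_all_ones A j_gt0; rewrite cardA => <-.
  rewrite sumEFin sumr_const cards_draws lee_fin mulr_natl.
  apply: ler_wpMn2l; first by rewrite exprn_ge0 ?powR_ge0.
  rewrite leq_bin2l // -[X in (_ <= 2 ^ (d * (j - X)))%N](size_tuple W).
  by rewrite card_subcubes // size_tuple (truncn_mulr_le _ (ltW eta_lt1)).
rewrite sumEFin sumr_const card_tuple card_ffun card_ord card_bool.
by rewrite !mulr_natl.
Qed.

Lemma Sset_card_gt_bad_event j (W : (prefix_len j).-tuple (letter d)) t :
  (j < #|Sset p j (tval W) t|)%N -> bad_event j t.
Proof.
set S := Sset p j (tval W) t => S_gt.
pose A := [set w in take j.+1 (enum S)].
have A_sub : {subset A <= S} by move=> w; rewrite inE => /mem_take; rewrite mem_enum.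
rewrite /bad_event -bigcup_seq_cond; exists W; first by rewrite /= mem_index_enum.
rewrite -bigcup_seq_cond; exists A.
  rewrite /= mem_index_enum !inE /=; apply/andP; split.
    by apply/fintype.subsetP => w /A_sub; rewrite !inE => /andP[_ /asboolP].
  rewrite cardsE (card_uniqP (take_uniq _ (enum_uniq _))).
  by rewrite size_takel // -cardE.
move=> _ /mapP[w + ->]; rewrite mem_enum => /A_sub.
by rewrite inE => /andP[/eqP ? _].
Qed.

End bad_events.

Lemma cvgn_series_EFin_lty (R : realType) (u : R ^nat) :
  cvgn (series u) -> (\sum_(n <oo) (u n)%:E < +oo)%E.
Proof.
move=> cu; rewrite (_ : (\sum_(n <oo) (u n)%:E)%E = lim ((EFin \o series u) @ \oo)).
  by rewrite EFin_lim // ltry.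
by apply: congr_lim; apply/funext => n /=; rewrite /series /= sumEFin.
Qed.

Theorem lemma3 (R : realType) (dT : measure_display) (T : measurableType dT)
  (P : probability T R) (d : nat) (hd : (0 < d)%N) (eta : R)
  (heta : 0 < eta < 1)
  (p : word d -> {RV P >-> R})
  (hp1 : forall w : word d, (0 < size w)%N ->
     P (p w @^-1` [set 1]) = (2 `^ (- (d%:R * (1 - eta) * (size w)%:R)))%:E)
  (hp0 : forall w : word d, (0 < size w)%N ->
     P (p w @^-1` [set 0]) = (1 - 2 `^ (- (d%:R * (1 - eta) * (size w)%:R)))%:E)
  (hind : mutually_independent_RV [set w : word d | (0 < size w)%N] p) :
  \forall t \ae P, exists N : nat, forall j : nat, (N <= j)%N ->
    forall W : (Num.truncn (eta * j%:R)).-tuple (letter d),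
      (#|Sset p j (tval W) t| <= j)%N.
Proof.
case/andP: heta => _ eta_lt1.
pose F n := bad_event eta p n.+1.
have mF n : measurable (F n) by exact: measurable_bad_event.
set x : R := (2 ^ d)%:R.
have summable : (\sum_(n <oo) P (F n) < +oo)%E.
  have := is_cvg_seriesZ (k := x ^+ 3) (is_cvg_series_exp_coeff (x ^+ 2)).
  move/cvgn_series_EFin_lty; apply: le_lt_trans.
  apply: lee_nneseries => n _ //.
  apply: le_trans (prob_bad_event_le hp1 hind eta_lt1 (ltn0Sn n)) _.
  by rewrite lee_fin; exact: bad_bound_le_exp_coeff.
exists (lim_sup_set F); split.
- apply: bigcap_measurableType => k _; apply: bigcup_measurable => i _; exact: mF.
- exact: lim_sup_set_cvg0.
move=> t /= not_good n _; apply: contrapT => not_bad; apply: not_good.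
exists n.+1 => -[//|j] le_nj W; rewrite leqNgt; apply/negP => /Sset_card_gt_bad_event.
by move=> bad; apply: not_bad; exists j.
Qed.
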